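(* Let $(X,\nu)$ be a probability space and $g:X\to X$ an invertible (mod $0$) measure preserving transformation. Let $Y$ be a compact Riemannian manifold and for each $x\in X$ let $f_x:Y\to Y$ be a diffeomorphism, depending measurably on $x$; let $F(x,y)=(g(x),f_x(y))$ and let $\mu=\int_X\sigma_x\,d\nu(x)$ be an ergodic $F$-invariant probability measure on $X\times Y$, where the $\sigma_x$ are probability measures on $Y$ with $(f_x)_*\sigma_x=\sigma_{g(x)}$. Let $P\subset X\times Y$ be a measurable subset, let $\pi:X\times Y\to X$ be the projection and $B=\pi(P)$, and for $x\in B$ write $P(x)=P\cap(\{x\}\times Y)$. Assume $\nu(B)=\nu_0>0$ and that there is $\sigma_0>0$ such that $\sigma_x(P(x))>\sigma_0$ for almost every $x\in B$. For almost every $z\in P$ let $n_l(z)$ denote the $l$-th return time of $z$ to $P$ under $F$ (for an integer $l\ge1$). Define $$P_n^l(x)=\{z\in P(x)\,:\,n_l(z)\ge n\},\qquad N_l(x)=\max\{n\,:\,\sigma_x(P_n^l(x))>\sigma_0\}.$$ Then $$\int_B N_l(x)\,d\nu<\frac{l}{\sigma_0}<\infty.$$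
   Context: The $l$-th return time $n_l(z)$ of $z\in P$ is the $l$-th smallest positive integer $n$ with $F^n(z)\in P$. Measures $\sigma_x(P(x))$ are understood by identifying $\{x\}\times Y$ with $Y$. *)

From HB Require Import structures.
From mathcomp Require Import all_boot all_order all_algebra.
From mathcomp Require Import all_classical all_reals all_analysis.
Set Implicit Arguments. Unset Strict Implicit. Unset Printing Implicit Defensive.
Import Order.TTheory GRing.Theory Num.Theory.
Local Open Scope classical_set_scope.
Local Open Scope ring_scope.

Definition skew_product {X Y : Type} (g : X -> X) (f : X -> Y -> Y) (z : X * Y) : X * Y :=
  (g z.1, f z.1 z.2).

Definition return_count {T : Type} (F : T -> T) (P : set T) (z : T) (m : nat) : nat :=
  (\sum_(1 <= k < m.+1) `[< P (iter k F z) >])%N.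

Definition is_lth_return_time {T : Type} (F : T -> T) (P : set T) (l : nat)
  (z : T) (n : nat) : Prop :=
  (0 < n)%N /\ P (iter n F z) /\ return_count F P z n = l.

(* "n_l(z) >= n"; if z has fewer than l returns, n_l(z) = +oo by convention *)
Definition lth_return_time_ge {T : Type} (F : T -> T) (P : set T) (l : nat)
  (z : T) (n : nat) : Prop :=
  forall m, is_lth_return_time F P l z m -> (n <= m)%N.

Definition Pnl {X Y : Type} (F : X * Y -> X * Y) (P : set (X * Y)) (l n : nat)
  (x : X) : set Y :=
  [set y | P (x, y) /\ lth_return_time_ge F P l (x, y) n].

(* N_l(x) = max { n : sigma_x(P_n^l(x)) > sigma_0 }, taken as a supremum in
   the extended reals (+oo if unbounded) *)
Definition Nl {d1 d2 : measure_display} {X : measurableType d1}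
  {Y : measurableType d2} {R : realType} (sigma : X -> {measure set Y -> \bar R})
  (F : X * Y -> X * Y) (P : set (X * Y)) (l : nat) (sigma0 : R) (x : X) : \bar R :=
  ereal_sup [set (n%:R)%:E | n in [set n : nat | (sigma0%:E < sigma x (Pnl F P l n x))%E]].

From HB Require Import structures.
From mathcomp Require Import all_boot all_order all_algebra.
From mathcomp Require Import all_classical all_reals all_analysis.
From mathcomp Require Import measurable_realfun zify lra.
Set Implicit Arguments. Unset Strict Implicit. Unset Printing Implicit Defensive.
Import Order.TTheory GRing.Theory Num.Theory.
Local Open Scope classical_set_scope.
Local Open Scope ring_scope.

(* Let Q_m be the set of points of P with fewer than l returns to P at times
   1..m, so that P_n^l(x) is the x-section of Q_(n-1).  Along an orbit segment of
   length M, at most l of the visits to P are followed by fewer than l further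
   visits before time M; integrating this count against the F-invariant measure
   mu gives the Kac-type bound  sum_m mu(Q_m) <= l.  Since n |-> sigma_x(P_n^l(x))
   is nonincreasing, N_l(x) <= 1 + sigma0^-1 sum_(n>=2) sigma_x(P_n^l(x)), and
   integrating over B gives at most nu(B) + (l - mu(P)) / sigma0, which is
   < l / sigma0 because mu(P) > sigma0 nu(B). *)

(* The t counted are the last (at most l) indices below M where c holds. *)
Lemma sum_final_hits_le (c : nat -> bool) (M l : nat) :
  (\sum_(t < M) (c t && (\sum_(t.+1 <= k < M) c k < l)%N) <= l)%N.
Proof.
elim: M l => [|M IH] l; first by rewrite big_ord0.
rewrite big_ord_recr /= big_geq //.
under eq_bigr => i _ do rewrite big_nat_recr //=.
case: (c M) => /=; last first.
  by under eq_bigr => i _ do rewrite addn0; rewrite addn0; exact: IH.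
case: l => [|l]; first by rewrite big1 // => i _; rewrite ltn0 andbF.
rewrite addn1 ltnS; under eq_bigr => i _ do rewrite addn1 ltnS.
exact: IH.
Qed.

Definition few_returns {T : Type} (F : T -> T) (P : set T) (l m : nat) : set T :=
  [set z | P z /\ (return_count F P z m < l)%N].

Section return_count.
Variables (T : Type) (F : T -> T) (P : set T).

Lemma return_count0 z : return_count F P z 0 = 0%N.
Proof. by rewrite /return_count big_geq. Qed.

Lemma return_countS z m :
  return_count F P z m.+1 = (return_count F P z m + `[< P (iter m.+1 F z) >])%N.
Proof. by rewrite /return_count big_nat_recr. Qed.

Lemma return_count_iter z i m : return_count F P (iter i F z) m =
  (\sum_(i.+1 <= k < (i + m).+1) `[< P (iter k F z) >])%N.
Proof.
rewrite /return_count big_add1 /= -[X in (_ = \sum_(X <= _ < _) _)%N]add0n.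
rewrite [RHS]big_addn subSS addKn.
by apply: eq_bigr => k _; rewrite -iterD addnS.
Qed.

Lemma return_count_homo z : {homo return_count F P z : m n / (m <= n)%N}.
Proof.
move=> m n /subnK <-; elim: (n - m)%N => [|k IH] //.
by rewrite addSn return_countS; exact: leq_trans IH (leq_addr _ _).
Qed.

Lemma few_returns_homo l : {homo few_returns F P l : m n / (m <= n)%N >-> n `<=` m}.
Proof.
move=> m n mn z [Pz zn]; split => //.
by apply: leq_ltn_trans zn; exact: return_count_homo.
Qed.

Lemma lth_return_time_geP l z n : (0 < l)%N ->
  lth_return_time_ge F P l z n <-> (return_count F P z n.-1 < l)%N.
Proof.
move=> l0; split => [zn|zn m [m0 [Pm zm]]]; last first.
  rewrite leqNgt; apply/negP => mn.
  have mn' : (m <= n.-1)%N by rewrite -ltnS (ltn_predK mn).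
  have := return_count_homo z mn'.
  by rewrite zm leqNgt zn.
rewrite ltnNge; apply/negP => ln.
have [k lk kmin] := ex_minnP (ex_intro (fun k => l <= return_count F P z k)%N _ ln).
case: k lk kmin => [|k] lk kmin; first by rewrite return_count0 leqNgt l0 in lk.
have zk : (return_count F P z k < l)%N.
  by rewrite ltnNge; apply/negP => /kmin; rewrite ltnn.
have Pk : P (iter k.+1 F z).
  apply: contraPP lk => nPk; apply/negP.
  by rewrite -ltnNge return_countS asboolF // addn0.
have zkl : return_count F P z k.+1 = l.
  by apply/eqP; rewrite eqn_leq lk andbT return_countS asboolT // addn1.
have := zn k.+1 (conj (ltn0Sn k) (conj Pk zkl)).
have := kmin _ ln; lia.
Qed.

End return_count.

Lemma measurable_preimageT d d' (T : measurableType d) (T' : measurableType d')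
    (h : T -> T') (A : set T') :
  measurable_fun setT h -> measurable A -> measurable (h @^-1` A).
Proof. by move=> mh mA; rewrite -[_ @^-1` _]setTI; exact: mh. Qed.

Section measurable_return_count.
Context d (T : measurableType d) (F : T -> T) (mF : measurable_fun setT F).
Variables (P : set T) (mP : measurable P).

Lemma measurable_iter n : measurable_fun setT (iter n F).
Proof.
elim: n => [|n IH]; first exact: measurable_id.
exact: measurableT_comp mF IH.
Qed.

Lemma measurable_return_count_lt m j :
  measurable [set z | (return_count F P z m < j)%N].
Proof.
elim: m j => [|m IH] j.
  rewrite (_ : [set z | _] = if j is 0 then set0 else setT); first by case: j.
  by apply/seteqP; split=> z; rewrite /= return_count0; case: j.
have mPm : measurable (iter m.+1 F @^-1` P).
  exact: measurable_preimageT (measurable_iter _) mP.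
rewrite (_ : [set z | _] =
    ([set z | (return_count F P z m < j)%N] `&` ~` (iter m.+1 F @^-1` P)) `|`
    ([set z | (return_count F P z m < j.-1)%N] `&` (iter m.+1 F @^-1` P))).
  by apply: measurableU; apply: measurableI => //; exact: measurableC.
apply/seteqP; split => z /=; rewrite return_countS; case: asboolP => Pz /=.
- by case: j => [|j] //; rewrite addn1 ltnS; right.
- by rewrite addn0; left.
- by case=> [[_ //]|[]]; case: j => // j; rewrite addn1 ltnS.
- by rewrite addn0; case=> [[]|[_ //]].
Qed.

Lemma measurable_few_returns l m : measurable (few_returns F P l m).
Proof. exact: measurableI mP (measurable_return_count_lt m l). Qed.

End measurable_return_count.

Lemma sum_few_returns_orbit_le {T : Type} (F : T -> T) (P : set T) l M z :
  (\sum_(i < M) `[< few_returns F P l (M - i.+1) (iter i F z) >] <= l)%N.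
Proof.
apply: leq_trans (sum_final_hits_le (fun k => `[< P (iter k F z) >]) M l).
apply/eq_leq/eq_bigr => i _.
by rewrite /few_returns asbool_and asboolb return_count_iter -addSn subnKC.
Qed.

Section kac_bound.
Local Open Scope ereal_scope.
Context d (T : measurableType d) (R : realType) (mu : probability T R) (F : T -> T).
Hypotheses (mF : measurable_fun setT F)
  (muF : forall A, measurable A -> mu (F @^-1` A) = mu A).
Variables (P : set T) (mP : measurable P) (l : nat).

Lemma measure_preimage_iter n A : measurable A -> mu (iter n F @^-1` A) = mu A.
Proof.
elim: n A => [|n IH] A mA //=.
rewrite (_ : iter n.+1 F @^-1` A = iter n F @^-1` (F @^-1` A)) //.
by rewrite IH ?muF //; exact: measurable_preimageT.
Qed.

(* By invariance mu(Q_(M-1-i)) = mu(F^-i Q_(M-1-i)), and each z lies in at most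
   l of the sets F^-i Q_(M-1-i), i < M. *)
Lemma sum_few_returns_le M : \sum_(m < M) mu (few_returns F P l m) <= l%:R%:E.
Proof.
have mQ i m : measurable (iter i F @^-1` few_returns F P l m).
  exact: measurable_preimageT (measurable_iter mF i) (measurable_few_returns mF mP l m).
rewrite (reindex_inj rev_ord_inj) /=.
under eq_bigr => i _ do rewrite -(measure_preimage_iter i (measurable_few_returns mF mP l _)).
under eq_bigr => i _ do rewrite -[X in mu X]setIT -integral_indic //.
rewrite -ge0_integral_sum //; last by move=> i; apply/measurable_EFinP/measurable_indic.
apply: le_trans (_ : \int[mu]_z (l%:R)%:E <= _); last first.
  have mu1 : (mu : {measure set T -> \bar R}) setT = 1 := probability_setT mu.
  by rewrite integral_cst // mu1 mule1.
apply: ge0_le_integral => //.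
- by move=> z _; apply: sume_ge0 => i _; rewrite lee_fin.
- by apply: emeasurable_sum => i; apply/measurable_EFinP/measurable_indic.
move=> z _; rewrite sumEFin lee_fin.
under eq_bigr => i _ do rewrite indicE.
rewrite -natr_sum ler_nat; apply: leq_trans (sum_few_returns_orbit_le F P l M z).
by apply/eq_leq/eq_bigr => i _.
Qed.

Lemma nneseries_few_returns_le : \sum_(m <oo) mu (few_returns F P l m) <= l%:R%:E.
Proof.
apply: lime_le; first exact: is_cvg_nneseries.
by apply: nearW => M; rewrite big_mkord; exact: sum_few_returns_le.
Qed.

Lemma measure_add_series_few_returns_le : (0 < l)%N ->
  mu P + \sum_(m <oo) mu (few_returns F P l m.+1) <= l%:R%:E.
Proof.
move=> l0; apply: le_trans nneseries_few_returns_le.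
rewrite [leRHS](nneseries_split 0 1) // big_nat1 add0n -nneseries_addn //.
have -> : few_returns F P l 0 = P.
  by apply/seteqP; split=> [z []//|z Pz]; split; rewrite ?return_count0.
by under [X in _ <= _ + X]eq_eseriesr => m _ do rewrite addn1.
Qed.

End kac_bound.

Section integral_bounds.
Local Open Scope ereal_scope.
Context d (T : measurableType d) (R : realType) (mu : {measure set T -> \bar R}).

(* No condition on f: Nl is -oo where its defining set is empty. *)
Lemma le_integral_ge0r (D : set T) (f h : T -> \bar R) :
  (forall x, D x -> 0 <= h x) -> (forall x, D x -> f x <= h x) ->
  \int[mu]_(x in D) f x <= \int[mu]_(x in D) h x.
Proof.
move=> h0 fh; rewrite integralE.
apply: (@le_trans _ _ (\int[mu]_(x in D) f^\+ x)).
  have : 0 <= \int[mu]_(x in D) f^\- x by apply: integral_ge0 => x _.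
  case: (\int[mu]_(x in D) f^\- x) => [r| |] //= r0; last by rewrite addeNy leNye.
  by rewrite geeDl // lee_fin oppr_le0 -lee_fin.
rewrite (ge0_integralE mu h0) (ge0_integralE mu (fun x _ => funepos_ge0 f x)).
apply: ereal_sup_le => _ [k /= kf <-]; exists k => //= x.
apply: le_trans (kf x) _; rewrite !patchE; case: ifPn => // /set_mem Dx.
by rewrite funeposE ge_max fh // h0.
Qed.

(* With k := (f - c)^+, the integral of f is at least c mu(D) + \int_D k, and
   \int_D k = 0 would make f <= c a.e. on D, forcing mu(D) = 0. *)
Lemma cst_lt_integral_ae (D : set T) (f : T -> \bar R) (c : R) :
  measurable D -> measurable_fun D f -> (forall x, D x -> 0 <= f x) ->
  0 < mu D -> mu D < +oo -> (0 <= c)%R ->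
  {ae mu, forall x, D x -> c%:E < f x} -> c%:E * mu D < \int[mu]_(x in D) f x.
Proof.
move=> mD mf f0 muD0 muDoo c0 cf.
pose k := (fun x => f x - c%:E)^\+.
have mk : measurable_fun D k.
  by apply/measurable_funepos/emeasurable_funB => //; exact: measurable_cst.
have k0 x : 0 <= k x := funepos_ge0 _ x.
have kE x : c%:E < f x -> k x = f x - c%:E.
  by move=> cfx; rewrite /k funeposE max_l // sube_ge0 ?fin_numE // ltW.
have k_gt0 : 0 < \int[mu]_(x in D) k x.
  rewrite lt0e integral_ge0 // andbT; apply/eqP => k_eq0.
  have k_ae0 : ae_eq mu D k (cst 0).
    apply/ae_eq_integral_abs => //; rewrite -k_eq0.
    by apply: eq_integral => x _; rewrite gee0_abs.
  have notD : {ae mu, forall x, ~ D x}.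
    apply: filterS2 cf k_ae0 => x cfx kx0 Dx.
    by have := cfx Dx; rewrite -sube_gt0 -kE ?cfx // kx0 // ltxx.
  have : mu D = 0 by apply: (measure_negligible mD); apply: negligibleS notD => x Dx /(_ Dx).
  by move/eqP; rewrite gt_eqF.
apply: (@lt_le_trans _ _ (\int[mu]_(x in D) (c%:E + k x))); last first.
  apply: ae_ge0_le_integral => //.
  - by move=> x _; rewrite adde_ge0.
  - exact: emeasurable_funD.
  by apply: filterS cf => x cfx Dx; rewrite kE ?cfx // addeC subeK.
rewrite ge0_integralD // integral_cst // lteDl // fin_numM // ge0_fin_numE //.
Qed.

End integral_bounds.

Section ereal_bounds.
Local Open Scope ereal_scope.

(* If c < s n with n >= 1, then s 2, ..., s n all exceed c. *)
Lemma ereal_sup_superlevel_le (R : realType) (c : R) (s : nat -> \bar R) :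
  (0 < c)%R -> (forall n, 0 <= s n) -> {homo s : m n / (m <= n)%N >-> n <= m} ->
  ereal_sup [set n%:R%:E | n in [set n | c%:E < s n]] <=
  1 + \sum_(k <oo) (c^-1)%:E * s k.+2.
Proof.
move=> c0 s0 s_anti; apply: ge_ereal_sup => _ [n /= csn <-].
have cs0 k : 0 <= (c^-1)%:E * s k by rewrite mule_ge0 // lee_fin invr_ge0 ltW.
case: n csn => [|n] csn; first by rewrite adde_ge0 // nneseries_ge0.
apply: (@le_trans _ _ (1 + \sum_(0 <= k < n) (c^-1)%:E * s k.+2)).
  rewrite -natr1 EFinD addeC leeD2l // -[n in n%:R]subn0 -sumr_const_nat -sumEFin.
  rewrite !big_mkord; apply: lee_sum => k _.
  rewrite -(mulVf (lt0r_neq0 c0)) EFinM lee_pmul2l ?lee_fin ?lte_fin ?invr_gt0 //.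
  by apply/ltW/(lt_le_trans csn)/s_anti; rewrite ltnS.
by rewrite leeD2l // nneseries_lim_ge.
Qed.

Lemma lte_add_scale_div (R : realType) (c L : R) (a p s : \bar R) :
  (0 < c)%R -> a \is a fin_num -> p \is a fin_num ->
  c%:E * a < p -> p + s <= L%:E -> a + (c^-1)%:E * s < (L / c)%:E.
Proof.
move=> c0; case: a => [a _|//|//]; case: p => [p _|//|//].
case: s => [s| |] cap; last 2 first.
- by rewrite addey // leye_eq.
- by rewrite gt0_muleNy ?lte_fin ?invr_gt0 // addeNy ltNyr.
rewrite -EFinM lte_fin in cap.
rewrite -EFinD lee_fin -EFinM -EFinD lte_fin => psL.
rewrite -(ltr_pM2l c0) mulrDr mulrA divff ?lt0r_neq0 // mul1r.
rewrite mulrCA divff ?lt0r_neq0 // mulr1; lra.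
Qed.

End ereal_bounds.

Lemma measurable_skew_product d1 d2 (X : measurableType d1) (Y : measurableType d2)
    (g : X -> X) (f : X -> Y -> Y) :
  measurable_fun setT g -> measurable_fun setT (fun z : X * Y => f z.1 z.2) ->
  measurable_fun setT (skew_product g f).
Proof.
move=> mg mf; apply/measurable_fun_pairP; split => //.
exact: measurableT_comp mg measurable_fst.
Qed.

Lemma Pnl_xsection {X Y : Type} (F : X * Y -> X * Y) (P : set (X * Y)) l n x :
  (0 < l)%N -> Pnl F P l n x = xsection (few_returns F P l n.-1) x.
Proof.
move=> l0; apply/seteqP; split => y; rewrite /xsection /= in_setE /=;
  by move=> [Pxy xyn]; split => //; apply/lth_return_time_geP.
Qed.

Section kernel_sections.
Local Open Scope ereal_scope.
Context d1 d2 (X : measurableType d1) (Y : measurableType d2) (R : realType)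
  (nu : {measure set X -> \bar R}) (sigma : R.-fker X ~> Y).

Lemma integral_xsection_in (D : set X) (A : set (X * Y)) :
  fst @` A `<=` D ->
  \int[nu]_(x in D) sigma x (xsection A x) = \int[nu]_x sigma x (xsection A x).
Proof.
move=> AD; rewrite integral_mkcond; apply: eq_integral => x _.
rewrite patchE; case: ifPn => // /negP Dx.
rewrite (_ : xsection A x = set0) ?measure0 //.
apply/seteqP; split => // y /set_mem Axy; apply/Dx/mem_set/AD.
by exists (x, y) => //; exact/set_mem.
Qed.

Lemma Nl_le_series (F : X * Y -> X * Y) (P : set (X * Y)) l (sigma0 : R) x :
  measurable_fun setT F -> measurable P -> (0 < l)%N -> (0 < sigma0)%R ->
  Nl sigma F P l sigma0 x <=
  1 + \sum_(k <oo) (sigma0^-1)%:E * sigma x (xsection (few_returns F P l k.+1) x).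
Proof.
move=> mF mP l0 s0.
have mQx m : measurable (xsection (few_returns F P l m) x).
  exact/measurable_xsection/measurable_few_returns.
apply: le_trans (ereal_sup_superlevel_le (s := fun n => sigma x (Pnl F P l n x)) s0 _ _) _.
- by move=> n; exact: measure_ge0.
- move=> m n mn; rewrite /= !Pnl_xsection //; apply: le_measure; rewrite ?inE //.
  by apply/le_xsection/few_returns_homo; rewrite -!subn1 leq_sub2r.
- by under eq_eseriesr => k _ do rewrite Pnl_xsection //.
Qed.

Lemma integral_Nl_le (D : set X) (F : X * Y -> X * Y) (P : set (X * Y)) l
    (sigma0 : R) :
  measurable D -> measurable_fun setT F -> measurable P -> (0 < l)%N -> (0 < sigma0)%R ->
  \int[nu]_(x in D) Nl sigma F P l sigma0 x <= nu D + (sigma0^-1)%:E *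
    \sum_(k <oo) \int[nu]_(x in D) sigma x (xsection (few_returns F P l k.+1) x).
Proof.
move=> mD mF mP l0 s0; have c0 : (0 <= sigma0^-1)%R by rewrite invr_ge0 ltW.
pose s k x := sigma x (xsection (few_returns F P l k.+1) x).
have ms k : measurable_fun D (s k).
  apply/measurable_funTS/measurable_fun_xsection_finite_kernel.
  exact/mem_set/measurable_few_returns.
have cs0 k x : 0 <= (sigma0^-1)%:E * s k x by rewrite mule_ge0.
apply: le_trans (le_integral_ge0r nu _ (fun x _ => Nl_le_series x mF mP l0 s0)) _.
  by move=> x _; rewrite adde_ge0 // nneseries_ge0 // => k _ _; exact: cs0.
rewrite ge0_integralD //; last 2 first.
- by move=> x _; apply: nneseries_ge0 => k _ _; exact: cs0.
- apply: ge0_emeasurable_sum => [k x _ _|k _]; first exact: cs0.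
  exact: measurable_funeM (ms k).
rewrite integral_cst // mul1e integral_nneseries //; last 2 first.
- by move=> k; exact: measurable_funeM (ms k).
- by move=> k x _; exact: cs0.
apply: leeD => //; rewrite -nneseriesZl; last by move=> k _; exact: integral_ge0.
apply: lee_nneseries => [k _ _|k _]; first by apply: integral_ge0 => x _; exact: cs0.
by rewrite ge0_integralZl_EFin //; exact: (ms k).
Qed.

End kernel_sections.

Theorem theorem3p1 (R : realType) (d1 d2 : measure_display)
  (X : measurableType d1) (Y : measurableType d2)
  (nu : probability X R) (g : X -> X)
  (f : X -> Y -> Y) (sigma : R.-pker X ~> Y) (mu : probability (X * Y)%type R)
  (P : set (X * Y)) (l : nat) (sigma0 : R) :
  measurable_fun setT g ->
  (forall A, measurable A -> nu (g @^-1` A) = nu A) ->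
  (exists g' : X -> X, measurable_fun setT g' /\
     {ae nu, forall x, g' (g x) = x} /\ {ae nu, forall x, g (g' x) = x}) ->
  measurable_fun setT (fun z : X * Y => f z.1 z.2) ->
  (forall x, exists h : Y -> Y, measurable_fun setT h /\
     cancel (f x) h /\ cancel h (f x)) ->
  (forall x U, measurable U -> sigma x (f x @^-1` U) = sigma (g x) U) ->
  (forall A, measurable A -> (mu A = \int[nu]_x sigma x (xsection A x))%E) ->
  (forall A, measurable A -> mu (skew_product g f @^-1` A) = mu A) ->
  (forall A, measurable A -> skew_product g f @^-1` A = A -> mu A = 0%E \/ mu A = 1%E) ->
  measurable P ->
  measurable (fst @` P) ->
  (0 < nu (fst @` P))%E ->
  0 < sigma0 ->
  {ae nu, forall x, (fst @` P) x -> (sigma0%:E < sigma x (xsection P x))%E} ->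
  (1 <= l)%N ->
  (\int[nu]_(x in fst @` P) Nl sigma (skew_product g f) P l sigma0 x < (l%:R / sigma0)%:E)%E.
Proof.
move=> mg _ _ mf _ _ muE muF _ mP mB B0 s0 Pae l0.
set F := skew_product g f; set B := fst @` P.
have mF : measurable_fun setT F := measurable_skew_product mg mf.
have muB A : measurable A -> A `<=` P ->
    (\int[nu]_(x in B) sigma x (xsection A x) = mu A)%E.
  by move=> mA AP; rewrite muE // integral_xsection_in //; exact: image_subset.
have kac := measure_add_series_few_returns_le mF muF mP l0.
have strictB : (sigma0%:E * nu B < mu P)%E.
  rewrite -muB //; apply: cst_lt_integral_ae => //.
  - exact/measurable_funTS/measurable_fun_xsection_finite_kernel/mem_set.
  - by rewrite ltey_eq fin_num_measure.
  - exact: ltW.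
apply: le_lt_trans (integral_Nl_le nu sigma mB mF mP l0 s0) _.
rewrite (_ : \sum_(k <oo) _ = \sum_(k <oo) mu (few_returns F P l k.+1))%E; last first.
  by apply: eq_eseriesr => k _; apply: muB => [|z []//]; exact: measurable_few_returns.
exact: lte_add_scale_div s0 (fin_num_measure _ _ mB) (fin_num_measure _ _ mP) strictB kac.
Qed.
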